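(* If $q=p^n$ is odd, then $U_{(q-1)/2}(x)+U_{(q-3)/2}(x)\equiv\left(\frac2q\right)(x-1)^{(q-1)/2}\pmod p$ as polynomials.
   Context: Chebyshev polynomials of the second kind $U_k\in\mathbb Z[x]$: $U_0=1$, $U_1=2x$, $U_{k+2}=2xU_{k+1}-U_k$. $\left(\frac2q\right)$ is $1$ if $2$ is a square in ${\mathbb F}_q$ and $-1$ otherwise. *)

From HB Require Import structures.
From mathcomp Require Import all_boot all_order all_algebra all_field.
Set Implicit Arguments. Unset Strict Implicit. Unset Printing Implicit Defensive.
Import Order.TTheory GRing.Theory Num.Theory.
Local Open Scope ring_scope.

(* chebU_pair k = (U_k, U_{k+1}) in Z[x] *)
Fixpoint chebU_pair (k : nat) : {poly int} * {poly int} :=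
  match k with
  | 0 => (1, 'X *+ 2)
  | k'.+1 => let: (a, b) := chebU_pair k' in (b, 'X *+ 2 * b - a)
  end.

Definition chebU (k : nat) : {poly int} := (chebU_pair k).1.

(* (2/q) for the finite field F = F_q, as an element of a ring R:
   1 if 2 is a square in F, -1 otherwise *)
Definition sq2_sign (F : finFieldType) (R : nzRingType) : R :=
  if [exists x : F, x ^+ 2 == 2] then 1 else -1.

(** Substituting x = (t + t^-1)/2, with t = s^2, turns U_{m+1} + U_m into
    (s^q - s^-q)/(s - s^-1) where q = 2m + 3.  In characteristic p, with q a
    power of p, the numerator is (s - s^-1)^q, so the quotient is
    ((s - s^-1)^2)^((q-1)/2) = (2x - 2)^((q-1)/2).  To make this rigorous over
    F_p[x] we adjoin s by the monic relation s^4 - 2x s^2 + 1 = 0, where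
    s - s^-1 need not be invertible but its square 2x - 2 is a regular
    element of F_p[x].  Finally 2^((q-1)/2) = (2/q) in F_q by Euler's
    criterion, and this identity between integers holds in F_p as well. *)
From HB Require Import structures.
From mathcomp Require Import all_boot all_order all_algebra all_field all_solvable.
From mathcomp Require Import ring zify.
Set Implicit Arguments. Unset Strict Implicit. Unset Printing Implicit Defensive.
Import GRing.Theory.
Local Open Scope ring_scope.

Lemma chebU_S k : chebU k.+1 = (chebU_pair k).2.
Proof. by rewrite /chebU /=; case: (chebU_pair k). Qed.

Lemma chebU_SS k : chebU k.+2 = 'X *+ 2 * chebU k.+1 - chebU k.
Proof. by rewrite !chebU_S /chebU /=; case: (chebU_pair k). Qed.

Lemma eq_linrec2 (R : pzRingType) (c : R) (u v : nat -> R) :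
  u 0%N = v 0%N -> u 1%N = v 1%N ->
  (forall k, u k.+2 = c * u k.+1 - u k) ->
  (forall k, v k.+2 = c * v k.+1 - v k) -> u =1 v.
Proof.
move=> u0 u1 uS vS k.
suff [] : u k = v k /\ u k.+1 = v k.+1 by [].
by elim: k => [|k [IHk IHk1]]; split=> //; rewrite uS vS IHk IHk1.
Qed.

Lemma exprB_pchar_pow (R : comNzRingType) (p : nat) (a b : R) n :
  p \in [pchar R] -> (a - b) ^+ (p ^ n) = a ^+ (p ^ n) - b ^+ (p ^ n).
Proof.
move=> pR; elim: n => [|n IHn]; first by rewrite expn0 !expr1.
rewrite expnSr !exprM IHn.
have := pFrobenius_autB_comm pR (mulrC (a ^+ (p ^ n)) (b ^+ (p ^ n))).
by rewrite !pFrobenius_autE.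
Qed.

Section Reciprocal.

Variables (R : comNzRingType) (s si : R).
Hypothesis s_si : s * si = 1.

Let c := s ^+ 2 + si ^+ 2.

Lemma subXX_rec k :
  s ^+ k.+4 - si ^+ k.+4 = c * (s ^+ k.+2 - si ^+ k.+2) - (s ^+ k - si ^+ k).
Proof.
have -> : c * (s ^+ k.+2 - si ^+ k.+2) =
    s ^+ k.+4 - si ^+ k.+4 + (s * si) ^+ 2 * (s ^+ k - si ^+ k).
  by rewrite /c !exprS; ring.
by rewrite s_si expr1n mul1r addrK.
Qed.

Variable G : nat -> R.
Hypotheses (G0 : G 0%N = 1) (G1 : G 1%N = c)
  (GS : forall k, G k.+2 = c * G k.+1 - G k).

Let W k := if k is k'.+1 then G k + G k' else 1.

Let W_rec k : W k.+2 = c * W k.+1 - W k.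
Proof.
case: k => [|k] /=; last by rewrite !GS; ring.
by rewrite GS G0 G1; ring.
Qed.

Lemma chebW_mul_sub k :
  (s - si) * (G k.+1 + G k) = s ^+ k.*2.+3 - si ^+ k.*2.+3.
Proof.
pose v k := s ^+ k.*2.+1 - si ^+ k.*2.+1.
have vS j : v j.+2 = c * v j.+1 - v j by rewrite /v !doubleS subXX_rec.
have v1 : (s - si) * W 1 = v 1%N.
  have -> : (s - si) * W 1 = v 1%N + (1 - s * si) * (s - si) by rewrite /= G0 G1 /v /c; ring.
  by rewrite s_si subrr mul0r addr0.
have := @eq_linrec2 R c (fun j => (s - si) * W j) v _ v1 _ vS k.+1.
apply; first by rewrite mulr1 /v /= !expr1.
by move=> j; rewrite W_rec; ring.
Qed.

Lemma sqrB_recip : (s - si) ^+ 2 = c - 2.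
Proof.
have -> : (s - si) ^+ 2 = c - (s * si) *+ 2 by rewrite /c; ring.
by rewrite s_si.
Qed.

Lemma chebW_mul_sub_pchar p n m : p \in [pchar R] -> (p ^ n = m.*2.+3)%N ->
  (s - si) * (G m.+1 + G m) = (s - si) * (c - 2) ^+ m.+1.
Proof.
move=> pR qE; rewrite chebW_mul_sub -qE -exprB_pchar_pow // qE exprS.
by rewrite -doubleS -mul2n exprM sqrB_recip.
Qed.

End Reciprocal.

Lemma qpolyC_inj (A : nzRingType) (h : {poly A}) : injective (qpolyC h).
Proof. by move=> a b /(congr1 val); rewrite /= => /polyC_inj. Qed.

Section ChebyshevExtension.

Variables (A : comNzRingType) (c : A).

(* Adjoins s with s^2 + s^-2 = c, the inverse of s being c s - s^3. *)
Definition cheb_modulus : {poly A} := 'X^4 - c%:P * 'X^2 + 1.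

Local Notation Q := {poly %/ cheb_modulus}.

Definition cheb_root : Q := in_qpoly cheb_modulus 'X.

Definition cheb_rootV : Q := qpolyC cheb_modulus c * cheb_root - cheb_root ^+ 3.

Let size_cheb_modulus_tail : (size ((- (c%:P * 'X^2) + 1)%R : {poly A}) < 5)%N.
Proof.
apply: (leq_ltn_trans (size_polyD _ _)); rewrite gtn_max size_polyN size_poly1.
by rewrite (leq_ltn_trans (size_polyMleq _ _)) // size_polyXn size_polyC; case: (c != 0).
Qed.

Lemma size_cheb_modulus : size cheb_modulus = 5%N.
Proof. by rewrite /cheb_modulus -addrA size_polyDl size_polyXn. Qed.

Lemma cheb_modulus_monic : cheb_modulus \is monic.
Proof.
by rewrite monicE /cheb_modulus -addrA lead_coefDl ?lead_coefXn ?size_polyXn.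
Qed.

Lemma cheb_root_rel :
  cheb_root ^+ 4 - qpolyC cheb_modulus c * cheb_root ^+ 2 + 1 = 0.
Proof.
have small_C : in_qpoly cheb_modulus c%:P = qpolyC cheb_modulus c.
  apply: val_inj; rewrite [LHS]in_qpoly_small // size_polyC.
  by apply: leq_ltn_trans (size_mk_monic_gt1 _); case: (c != 0).
rewrite -small_C /cheb_root -!rmorphXn -rmorphM -rmorphB -(rmorph1 (in_qpoly _)).
rewrite -rmorphD; apply: val_inj => /=.
have -> : mk_monic cheb_modulus = cheb_modulus.
  by rewrite /mk_monic size_cheb_modulus cheb_modulus_monic.
exact: Pdiv.RingMonic.rmodpp cheb_modulus_monic.
Qed.

Lemma cheb_rootVr : cheb_root * cheb_rootV = 1.
Proof.
have -> : cheb_root * cheb_rootV =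
    1 - (cheb_root ^+ 4 - qpolyC cheb_modulus c * cheb_root ^+ 2 + 1).
  by rewrite /cheb_rootV; ring.
by rewrite cheb_root_rel subr0.
Qed.

Lemma cheb_root_sqrD : cheb_root ^+ 2 + cheb_rootV ^+ 2 = qpolyC cheb_modulus c.
Proof.
have -> : cheb_root ^+ 2 + cheb_rootV ^+ 2 = qpolyC cheb_modulus c +
    (cheb_root ^+ 2 - qpolyC cheb_modulus c) *
    (cheb_root ^+ 4 - qpolyC cheb_modulus c * cheb_root ^+ 2 + 1).
  by rewrite /cheb_rootV; ring.
by rewrite cheb_root_rel mulr0 addr0.
Qed.

End ChebyshevExtension.

Lemma pchar_two_neq0 (R : nzSemiRingType) p : p \in [pchar R] -> odd p -> 2%:R != 0 :> R.
Proof.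
move=> pR; rewrite -(dvdn_pcharf pR); have := pcharf_prime pR.
by case: p {pR} => [|[|[|p]]].
Qed.

Lemma two_X_sub (R : comNzRingType) : 'X *+ 2 - 2 = (2%:R : R)%:P * ('X - 1) :> {poly R}.
Proof. by rewrite polyC_natr; ring. Qed.

Lemma rmorph_mul_sqrt_inj (P : idomainType) (Q : comNzRingType)
    (f : {rmorphism P -> Q}) (u : Q) (d x y : P) :
  injective f -> u ^+ 2 = f d -> d != 0 -> u * f x = u * f y -> x = y.
Proof.
move=> f_inj ud d0 /(congr1 (fun z => u * z)).
by rewrite !mulrA -expr2 ud -!rmorphM => /f_inj /(mulfI d0).
Qed.

Lemma chebW_Fp p n m : prime p -> (p ^ n = m.*2.+3)%N ->
  map_poly (intr : int -> 'F_p) (chebU m.+1 + chebU m) = ('X *+ 2 - 2) ^+ m.+1.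
Proof.
move=> p_pr qE; have pFp := pchar_Fp p_pr.
pose c : {poly 'F_p} := 'X *+ 2.
pose G k := qpolyC (cheb_modulus c) (map_poly intr (chebU k)).
have pQ : p \in [pchar {poly %/ cheb_modulus c}].
  by rewrite pchar_qpoly (rmorph_pchar polyC).
have G0 : G 0%N = 1 by rewrite /G /chebU /= !rmorph1.
have G1 : G 1%N = cheb_root c ^+ 2 + cheb_rootV c ^+ 2.
  by rewrite cheb_root_sqrD /G chebU_S /= raddfMn /= map_polyX.
have GS k : G k.+2 = (cheb_root c ^+ 2 + cheb_rootV c ^+ 2) * G k.+1 - G k.
  by rewrite /G chebU_SS !rmorphB !rmorphM raddfMn /= map_polyX cheb_root_sqrD.
have odd_p : odd p.
  have : odd (p ^ n) by rewrite qE /= odd_double.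
  by rewrite oddX => /orP[/eqP n0|//]; move: qE; rewrite n0.
have c2_neq0 : c - 2 != 0.
  by rewrite /c two_X_sub mulf_neq0 ?polyXsubC_eq0 ?polyC_eq0 ?(pchar_two_neq0 pFp).
have sqr_u : (cheb_root c - cheb_rootV c) ^+ 2 = qpolyC (cheb_modulus c) (c - 2).
  by rewrite sqrB_recip ?cheb_rootVr // cheb_root_sqrD rmorphB rmorph_nat.
have := chebW_mul_sub_pchar (cheb_rootVr c) G0 G1 GS pQ qE.
rewrite cheb_root_sqrD /G -rmorphD -(rmorph_nat (qpolyC _)) -rmorphB -rmorphXn.
by move/(rmorph_mul_sqrt_inj (@qpolyC_inj _ _) sqr_u c2_neq0); rewrite rmorphD.
Qed.

Lemma expf_card_pred (F : finFieldType) (x : F) : x != 0 -> x ^+ #|F|.-1 = 1.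
Proof.
move=> x0; apply: (mulfI x0); rewrite mulr1 -exprS prednK ?expf_card //.
by apply/card_gt0P; exists 0.
Qed.

Lemma finField_prim_root (F : finFieldType) : exists g : F, #|F|.-1.-primitive_root g.
Proof.
have card_nz : #|predC1 (0 : F)| = #|F|.-1 := cardC1 0.
have: has #|F|.-1.-primitive_root (enum (predC1 (0 : F))).
  apply: has_prim_root; rewrite ?enum_uniq // -?cardE ?card_nz //.
    by rewrite -card_nz; apply/card_gt0P; exists 1; rewrite !inE oner_neq0.
  by apply/allP => x; rewrite mem_enum unity_rootE => /expf_card_pred ->.
by case/hasP => g _; exists g.
Qed.

Lemma Euler_criterion (F : finFieldType) (a : F) : odd #|F| -> a != 0 ->
  a ^+ #|F|.-1./2 = if [exists x : F, x ^+ 2 == a] then 1 else -1.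
Proof.
move=> oddF a0; set m := #|F|.-1./2.
have cardF : #|F|.-1 = m.*2.
  by rewrite /m; move: oddF (odd_double_half #|F|.-1); case: #|F| => //= k; lia.
have m_gt0 : (0 < m)%N by move: (finNzRing_gt1 F : (1 < #|F|)%N) cardF; clearbody m; lia.
case: ifP => [/existsP[y /eqP ya] | nsq].
  have y0 : y != 0 by apply: contraNneq a0 => y0; rewrite -ya y0 expr0n.
  by rewrite -ya -exprM mul2n -cardF expf_card_pred.
have [g g_prim] := finField_prim_root F.
have [i ai] := prim_rootP g_prim (expf_card_pred a0).
have odd_i : odd i.
  apply: contraFT nsq => even_i; apply/existsP; exists (g ^+ i./2).
  by rewrite -exprM muln2 halfK (negbTE even_i) subn0 ai.
have gm : g ^+ m = -1.
  have : (g ^+ m) ^+ 2 == 1 by rewrite -exprM muln2 -cardF prim_expr_order.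
  rewrite sqrf_eq1 -(prim_order_dvd g_prim) cardF => /orP[/(dvdn_leq m_gt0)|/eqP //].
  by rewrite -mul2n leqNgt ltn_Pmull.
by rewrite ai exprAC gm -signr_odd odd_i.
Qed.

Lemma intr_eq_pchar (R S : nzRingType) p (a b : int) :
  p \in [pchar R] -> p \in [pchar S] -> (a%:~R == b%:~R :> R) = (a%:~R == b%:~R :> S).
Proof.
move=> pR pS; rewrite -[LHS]subr_eq0 -[RHS]subr_eq0 -!intrB.
by rewrite -(dvdz_pcharf pR) -(dvdz_pcharf pS).
Qed.

Lemma sq2_sign_pchar (F : finFieldType) (R S : nzRingType) p k :
  p \in [pchar R] -> p \in [pchar S] ->
  (2%:R ^+ k == sq2_sign F R :> R) = (2%:R ^+ k == sq2_sign F S :> S).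
Proof.
move=> pR pS; have E (T : nzRingType) : 2%:R ^+ k = ((2 : int) ^+ k)%:~R :> T.
  by rewrite rmorphXn rmorph_nat.
rewrite (E R) (E S) /sq2_sign; case: ifP => _.
  by have := intr_eq_pchar (2 ^+ k) 1 pR pS; rewrite !rmorph1.
by have := intr_eq_pchar (2 ^+ k) (-1) pR pS; rewrite !rmorphN !rmorph1.
Qed.

Theorem proposition9p4 (p n : nat) (F : finFieldType) :
  prime p -> (0 < n)%N -> odd (p ^ n) -> #|F| = (p ^ n)%N ->
  map_poly (intr : int -> 'F_p) (chebU (p ^ n).-1./2 + chebU (p ^ n - 3)./2)
  = (sq2_sign F 'F_p)%:P * ('X - 1) ^+ (p ^ n).-1./2.
Proof.
move=> p_pr n_gt0 odd_q cardF.
have pF : p \in [pchar F] := card_finPcharP cardF p_pr.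
have pFp : p \in [pchar 'F_p] := pchar_Fp p_pr.
have odd_p : odd p by move: odd_q; rewrite oddX eqn0Ngt n_gt0.
have p_ge3 : (3 <= p)%N by move: (prime_gt1 p_pr) odd_p; case: (p) => [|[|[|]]].
have [m qE] : exists m, (p ^ n = m.*2.+3)%N.
  have p_le_q : (p <= p ^ n)%N by rewrite -{1}(expn1 p) leq_pexp2l ?(prime_gt0 p_pr).
  by exists (p ^ n)./2.-1; move: (odd_double_half (p ^ n)); rewrite odd_q add1n; lia.
have [-> ->] : (p ^ n).-1./2 = m.+1 /\ (p ^ n - 3)./2 = m.
  by rewrite qE -doubleS doubleK subSS subSS subSS subn0 doubleK.
rewrite (chebW_Fp p_pr qE) two_X_sub exprMn -polyC_exp; congr (_%:P * _).
have oddF : odd #|F| by rewrite cardF.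
have := Euler_criterion oddF (pchar_two_neq0 pF odd_p).
rewrite cardF qE -doubleS doubleK => /eqP.
by rewrite (sq2_sign_pchar F _ pF pFp) => /eqP.
Qed.
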